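(* For every $k\geq 0$, the polynomial $H_k(x)$ is symmetric: for all integers $m$, the coefficient of $x^m$ in $H_k(x)$ equals the coefficient of $x^{2(k+1)(k+2)-1-m}$. Equivalently, writing $h_k(i,j)$ for the coefficient of $x^{2(k+1)i+j}$, one has $h_k(i,j)=h_k(k+1-i,\,2k+1-j)$ for $0\le i\le k+1$, $0\le j\le 2k+1$.
   Context: $B_n(y)=\sum_{\pi\in B_n}y^{\mathrm{des}_B(\pi)}$ is the type $B$ Eulerian polynomial: $B_n$ is the set of signed permutations $\pi_1\cdots\pi_n$ of $[n]$, and with $\pi_0=0$, $\mathrm{des}_B(\pi)$ counts $i\in\{0,\dots,n-1\}$ with $\pi_i>\pi_{i+1}$; $B_0=1$. Define \[H_k(x)=\sum_{l=0}^{k}B_{k-l}(x^{2k+2})(x^{2k+2}-1)^l\sum_{s=l}^{k}\binom{s}{l}x^{2k+1-s}+\sum_{l=0}^{k}B_{k-l}(x^{-2k-2})(x^{-2k-2}-1)^l\sum_{s=l}^{k}\binom{s}{l}x^{2(k+1)^2+s}.\] *)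

From HB Require Import structures.
From mathcomp Require Import all_boot all_order all_algebra all_fingroup.
From mathcomp Require Import fraction.
Set Implicit Arguments. Unset Strict Implicit. Unset Printing Implicit Defensive.
Import Order.TTheory GRing.Theory Num.Theory.
Local Open Scope ring_scope.

Notation tofracP x := (@FracField.tofrac {poly int} x).

(* A signed permutation of [n] is a pair (s, e) with s : 'S_n and a sign
   vector e; its one-line entry at position i+1 (i : 'I_n) is
   pi_{i+1} = -(s i + 1) if e i, else s i + 1. *)
Definition spval (n : nat) (s : 'S_n) (e : {ffun 'I_n -> bool}) (i : 'I_n) : int :=
  if e i then - ((s i).+1 %:Z) else (s i).+1 %:Z.

Definition spat (n : nat) (s : 'S_n) (e : {ffun 'I_n -> bool}) (j : nat) : int :=
  if j is j'.+1 then
    (if @insub _ (fun i => i < n)%N 'I_n j' is Some i then spval s e i else 0)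
  else 0.

Definition desB (n : nat) (s : 'S_n) (e : {ffun 'I_n -> bool}) : nat :=
  (\sum_(j < n) (spat s e j.+1 < spat s e j)%R)%N.

Definition Bpoly (n : nat) : {poly int} :=
  \sum_(s : 'S_n) \sum_(e : {ffun 'I_n -> bool}) 'X^(desB s e).

(* H_k(x), computed in the field of rational functions {fraction {poly int}}
   (it involves x^{-1}); it turns out to be a polynomial. *)
Definition Hk (k : nat) : {fraction {poly int}} :=
  let X : {fraction {poly int}} := tofracP 'X in
  let N := (2 * k + 2)%N in
  \sum_(l < k.+1)
     (map_poly (fun c : int => tofracP c%:P) (Bpoly (k - l))).[X ^+ N]
     * (X ^+ N - 1) ^+ l
     * \sum_(l <= s < k.+1) ('C(s, l))%:R * X ^+ (2 * k + 1 - s)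
  + \sum_(l < k.+1)
     (map_poly (fun c : int => tofracP c%:P) (Bpoly (k - l))).[X ^- N]
     * (X ^- N - 1) ^+ l
     * \sum_(l <= s < k.+1) ('C(s, l))%:R * X ^+ (2 * (k + 1) ^ 2 + s).

Definition coefz (p : {poly int}) (m : int) : int :=
  match m with Posz n => p`_n | Negz _ => 0 end.

(* The second sum defining H_k is x^(2(k+1)(k+2)-1) times the first sum evaluated
   at 1/x, and the first sum is a polynomial G of degree less than 2(k+1)(k+2).
   Hence H_k = G + x^(2(k+1)(k+2)-1) G(1/x) is G plus its reversal, a palindrome. *)

From HB Require Import structures.
From mathcomp Require Import all_boot all_order all_algebra all_fingroup.
From mathcomp Require Import fraction zify.
Set Implicit Arguments.
Unset Strict Implicit.
Unset Printing Implicit Defensive.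
Import Order.TTheory GRing.Theory Num.Theory.
Local Open Scope ring_scope.

Section ReciprocalPolynomial.
Variable R : idomainType.
Local Notation F := {fraction {poly R}}.
Local Notation "x %:F" := (@FracField.tofrac {poly R} x).

Definition fracC := @FracField.tofrac {poly R} \o @polyC R.
Definition fracX : F := 'X%:F.

Lemma fracX_neq0 : fracX != 0.
Proof. by rewrite tofrac_eq0 polyX_eq0. Qed.

Lemma horner_map_fracC (q : {poly R}) : (map_poly fracC q).[fracX] = q%:F.
Proof.
elim/poly_ind: q => [|q c IHq]; first by rewrite !rmorph0 horner0.
by rewrite rmorphD rmorphM /= map_polyX map_polyC hornerMXaddC IHq !rmorphD rmorphM.
Qed.

Definition revp n (q : {poly R}) := \poly_(i < n.+1) q`_(n - i).

Lemma tofrac_revp n (q : {poly R}) : (size q <= n.+1)%N ->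
  (revp n q)%:F = fracX ^+ n * (map_poly fracC q).[fracX^-1].
Proof.
move=> hq; have hrev : (size (revp n q) <= n.+1)%N by apply: size_poly.
rewrite -horner_map_fracC !(@horner_coef_wide _ n.+1) ?(leq_trans (size_poly _ _)) //.
rewrite mulr_sumr (reindex_inj rev_ord_inj); apply: eq_bigr => i _ /=.
have hi : (i <= n)%N by rewrite -ltnS.
rewrite !coef_map coef_poly subSS ltnS leq_subr subKn // mulrCA exprVn.
have -> : fracX ^+ n = fracX ^+ (n - i) * fracX ^+ i by rewrite -exprD subnK.
by rewrite mulfK // expf_neq0 // fracX_neq0.
Qed.

Lemma size_add_revp n (q : {poly R}) : (size q <= n.+1)%N ->
  (size (q + revp n q)%R <= n.+1)%N.
Proof.
by move=> hq; rewrite (leq_trans (size_polyD _ _)) // geq_max hq size_poly.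
Qed.

Lemma coef_add_revp n (q : {poly R}) i : (i <= n)%N ->
  (q + revp n q)`_(n - i) = (q + revp n q)`_i.
Proof.
by move=> hi; rewrite !coefD !coef_poly subKn // !ltnS hi leq_subr addrC.
Qed.

End ReciprocalPolynomial.

Arguments fracC {R}.
Arguments fracX {R}.

Lemma coefz_palindromic n (p : {poly int}) : (size p <= n.+1)%N ->
  (forall i, (i <= n)%N -> p`_(n - i) = p`_i) ->
  forall m : int, coefz p m = coefz p (n%:Z - m).
Proof.
move=> hp hsym.
have p_out j : (n < j)%N -> p`_j = 0 by move/(leq_trans hp)/leq_sizeP; apply.
case=> [i|j] /=.
  case: (leqP i n) => hi.
    by rewrite subzn // /= hsym.
  by rewrite p_out //; case E: (n%:Z - i%:Z) => //; lia.
by case E: (n%:Z - Negz j) => [i|] //=; rewrite p_out //; lia.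
Qed.

Lemma desB_le n (s : 'S_n) (e : {ffun 'I_n -> bool}) : (desB s e <= n)%N.
Proof.
rewrite /desB -[leqRHS]card_ord -sum1_card.
by apply: leq_sum => j _; apply: leq_b1.
Qed.

Lemma size_Bpoly n : (size (Bpoly n) <= n.+1)%N.
Proof.
rewrite (leq_trans (size_sum _ _ _)) //; apply/bigmax_leqP => s _.
rewrite (leq_trans (size_sum _ _ _)) //; apply/bigmax_leqP => e _.
by rewrite size_polyXn ltnS desB_le.
Qed.

Definition Hk_half (k : nat) : {poly int} :=
  \sum_(l < k.+1) (Bpoly (k - l) \Po 'X^(2 * k + 2)) * ('X^(2 * k + 2) - 1) ^+ l
    * \sum_(l <= s < k.+1) ('C(s, l))%:R * 'X^(2 * k + 1 - s).

Definition Hk_sum (k : nat) (y : {fraction {poly int}}) : {fraction {poly int}} :=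
  \sum_(l < k.+1)
     (map_poly (fun c : int => tofracP c%:P) (Bpoly (k - l))).[y ^+ (2 * k + 2)]
     * (y ^+ (2 * k + 2) - 1) ^+ l
     * \sum_(l <= s < k.+1) ('C(s, l))%:R * y ^+ (2 * k + 1 - s).

Lemma horner_map_Hk_half k y : (map_poly fracC (Hk_half k)).[y] = Hk_sum k y.
Proof.
rewrite rmorph_sum horner_sum; apply: eq_bigr => l _.
rewrite !rmorphM !hornerM; congr (_ * _ * _).
- by rewrite /= map_comp_poly horner_comp (map_polyXn fracC) hornerXn.
- by rewrite rmorphXn raddfB /= rmorph1 (map_polyXn fracC) !hornerE.
rewrite raddf_sum horner_sum; apply: eq_bigr => s _.
by rewrite !mulr_natl raddfMn /= (map_polyXn fracC) hornerMn hornerXn.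
Qed.

Lemma size_Hk_half k : (size (Hk_half k) <= 2 * (k + 1) ^ 2)%N.
Proof.
rewrite (leq_trans (size_sum _ _ _)) //; apply/bigmax_leqP => l _.
have hl : (l <= k)%N by rewrite -ltnS.
set N := (2 * k + 2)%N.
have hB : (size (Bpoly (k - l) \Po 'X^N) <= (k - l) * N + 1)%N.
  rewrite (leq_trans (size_comp_poly_leq _ _)) // size_polyXn addn1 ltnS leq_mul //.
  by have := size_Bpoly (k - l); lia.
have hP : (size (('X^N - 1 : {poly int}) ^+ l) <= N * l + 1)%N.
  rewrite (leq_trans (size_poly_exp_leq _ _)) // size_XnsubC ?addn1 //.
  by rewrite /N addn2.
have hS : (size (\sum_(l <= s < k.+1) ('C(s, l))%:R * 'X^(2 * k + 1 - s) : {poly int})%R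
           <= N)%N.
  rewrite (leq_trans (size_sum _ _ _)) //; apply/bigmax_leqP_seq => s _ _.
  by rewrite -polyC_natr mul_polyC (leq_trans (size_scale_leq _ _)) // size_polyXn; lia.
have eN : ((k - l) * N + N * l + N = 2 * (k + 1) ^ 2)%N by rewrite /N; nia.
have hAB : (size ((Bpoly (k - l) \Po 'X^N) * ('X^N - 1) ^+ l)%R
            <= (k - l) * N + N * l + 1)%N.
  rewrite (leq_trans (size_polyMleq _ _)) // -subn1 leq_subLR.
  by rewrite (leq_trans (leq_add hB hP)) //; lia.
rewrite (leq_trans (size_polyMleq _ _)) // -eN -subn1 leq_subLR.
by rewrite (leq_trans (leq_add hAB hS)) //; lia.
Qed.

Lemma Hk_split k :
  Hk k = Hk_sum k fracX + fracX ^+ (2 * (k + 1) * (k + 2)).-1 * Hk_sum k fracX^-1.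
Proof.
congr (_ + _); rewrite mulr_sumr; apply: eq_bigr => l _.
rewrite !exprVn [RHS]mulrCA; congr (_ * _).
rewrite mulr_sumr; apply: eq_big_nat => s /andP[_ hs].
rewrite [RHS]mulrCA exprVn; congr (_ * _).
have -> : (2 * (k + 1) * (k + 2)).-1 = (2 * (k + 1) ^ 2 + s + (2 * k + 1 - s))%N.
  by rewrite -addnA subnKC; [nia | lia].
by rewrite [in RHS]exprD mulfK // expf_neq0 // fracX_neq0.
Qed.

Theorem corollary3p3 (k : nat) :
  exists p : {poly int},
    Hk k = tofracP p /\
    forall m : int,
      coefz p m = coefz p ((2 * (k + 1) * (k + 2))%N%:Z - 1 - m).
Proof.
set D := (2 * (k + 1) * (k + 2)).-1.
have size_half : (size (Hk_half k) <= D.+1)%N.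
  by rewrite (leq_trans (size_Hk_half k)) // /D; nia.
exists (Hk_half k + revp D (Hk_half k)); split.
  rewrite Hk_split -!horner_map_Hk_half horner_map_fracC tofracD.
  by rewrite (tofrac_revp size_half).
move=> m; rewrite (coefz_palindromic (size_add_revp size_half) (@coef_add_revp _ D _) m).
by congr coefz; rewrite /D; lia.
Qed.
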